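(* Let $\lambda_2,\lambda_3$ be distinct nonzero complex numbers, $J_1^*=\mathrm{diag}(0,\lambda_2,\lambda_3)$, and $h>0$. Set $$\psi=1,\qquad \phi=\frac{(\lambda_2-\lambda_3)(e^{\lambda_2h}-1)(e^{\lambda_3h}-1)}{\lambda_2\lambda_3(e^{\lambda_2h}-e^{\lambda_3h})},\qquad \theta=\frac{\lambda_3(e^{\lambda_2h}-1)-\lambda_2(e^{\lambda_3h}-1)}{(\lambda_2-\lambda_3)(e^{\lambda_2h}-1)(e^{\lambda_3h}-1)}.$$ Then (whenever these expressions are defined and the scheme is uniquely solvable for $\mathbf{x}_{k+1}$) the difference scheme $$\frac{\mathbf{x}_{k+1}-\psi\mathbf{x}_k}{\phi}=J_1^*\big[\theta\mathbf{x}_{k+1}+(1-\theta)\mathbf{x}_k\big]$$ is exact for the system $\mathbf{x}'=J_1^*\mathbf{x}$.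
   Context: A one-step difference scheme with step size $h>0$ for $\mathbf{x}'=M\mathbf{x}$ is called exact if for every initial vector $\mathbf{x}_0$ the sequence $(\mathbf{x}_k)$ it generates satisfies $\mathbf{x}_k=\mathbf{x}(kh)$ for all $k\ge 0$, where $\mathbf{x}(t)$ solves $\mathbf{x}'=M\mathbf{x}$, $\mathbf{x}(0)=\mathbf{x}_0$. *)

From mathcomp Require Import all_boot all_order all_algebra.
From mathcomp Require Import all_classical all_reals all_analysis.
From mathcomp.real_closed Require Import complex.
Set Implicit Arguments. Unset Strict Implicit. Unset Printing Implicit Defensive.
Import GRing.Theory Num.Theory.
Local Open Scope ring_scope.

Definition cexp {R : realType} (z : R[i]) : R[i] :=
  Complex (expR (complex.Re z) * cos (complex.Im z))
          (expR (complex.Re z) * sin (complex.Im z)).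

Definition is_solution {R : realType} {n : nat} (M : 'M[R[i]]_n)
    (x : R -> 'cV[R[i]]_n) : Prop :=
  forall (t : R) (i : 'I_n),
    is_derive t 1 (fun s => complex.Re (x s i ord0)) (complex.Re ((M *m x t) i ord0)) /\
    is_derive t 1 (fun s => complex.Im (x s i ord0)) (complex.Im ((M *m x t) i ord0)).

(* A one-step scheme is given by the relation  step x_k x_{k+1}  it imposes. *)
Definition exact_scheme {R : realType} {n : nat} (M : 'M[R[i]]_n) (h : R)
    (step : 'cV[R[i]]_n -> 'cV[R[i]]_n -> Prop) : Prop :=
  forall (x0 : 'cV[R[i]]_n) (xs : nat -> 'cV[R[i]]_n),
    xs 0%N = x0 -> (forall k, step (xs k) (xs k.+1)) ->
    forall x : R -> 'cV[R[i]]_n, is_solution M x -> x 0 = x0 ->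
    forall k : nat, xs k = x (k%:R * h).

Definition J1star {R : realType} (l2 l3 : R[i]) : 'M[R[i]]_3 :=
  diag_mx (\row_(i < 3) [:: 0; l2; l3]`_i).

Definition hC {R : realType} (h : R) : R[i] := Complex h 0.

Definition psi5 {R : realType} : R[i] := 1.

Definition phi5 {R : realType} (l2 l3 : R[i]) (h : R) : R[i] :=
  ((l2 - l3) * (cexp (l2 * hC h) - 1) * (cexp (l3 * hC h) - 1)) /
  (l2 * l3 * (cexp (l2 * hC h) - cexp (l3 * hC h))).

Definition theta5 {R : realType} (l2 l3 : R[i]) (h : R) : R[i] :=
  (l3 * (cexp (l2 * hC h) - 1) - l2 * (cexp (l3 * hC h) - 1)) /
  ((l2 - l3) * (cexp (l2 * hC h) - 1) * (cexp (l3 * hC h) - 1)).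

Definition theta_scheme {R : realType} {n : nat} (M : 'M[R[i]]_n)
    (psi phi theta : R[i]) (xk xk1 : 'cV[R[i]]_n) : Prop :=
  phi^-1 *: (xk1 - psi *: xk) = M *m (theta *: xk1 + (1 - theta) *: xk).

From mathcomp Require Import all_boot all_order all_algebra.
From mathcomp Require Import all_classical all_reals all_analysis.
From mathcomp.real_closed Require Import complex.
From mathcomp Require Import ring.
(* J_1^* is diagonal, so every component of a solution of x' = J_1^* x obeys
   y' = lam y and is advanced over one step by the factor e^{lam h}; the flow
   property comes from the constancy of e^{-lam t} y(t).  Componentwise the
   scheme reads (1/phi - theta lam) y_{k+1} = (1/phi + (1 - theta) lam) y_k, so
   it is exact as soon as its amplification factor equals e^{lam h} for
   lam = 0, lam_2, lam_3.  For lam = 0 this holds for any phi and theta, and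
   phi and theta are precisely the solution of the two remaining equations. *)

Set Implicit Arguments. Unset Strict Implicit. Unset Printing Implicit Defensive.
Import GRing.Theory Num.Theory.
Local Open Scope ring_scope.

Section ScalarLinearODE.
Variable R : realType.
Implicit Types (z w lam : R[i]) (s t h : R).

Lemma cexpD z w : cexp (z + w) = cexp z * cexp w.
Proof.
case: z w => a b [c d]; rewrite /cexp /= expRD cosD sinD; congr Complex; ring.
Qed.

Lemma cexp0 : cexp 0 = 1 :> R[i].
Proof. by rewrite /cexp /= expR0 cos0 sin0 mulr1 mulr0. Qed.

Lemma cexpNK z : cexp (- z) * cexp z = 1.
Proof. by rewrite -cexpD addNr cexp0. Qed.

Lemma hCD s t : hC (s + t) = hC s + hC t :> R[i].
Proof. by apply/eqP; rewrite /hC eq_complex /= addr0 !eqxx. Qed.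

Definition scalar_solution lam (y : R -> R[i]) : Prop :=
  forall t, is_derive t 1 (fun s => complex.Re (y s)) (complex.Re (lam * y t)) /\
            is_derive t 1 (fun s => complex.Im (y s)) (complex.Im (lam * y t)).

(* Real and imaginary parts of e^{-(a + ib) t} (u + iv)(t). *)
Lemma damped_rotation_invariant (a b : R) (u v : R -> R) :
  (forall t, is_derive t 1 u (a * u t - b * v t) /\
             is_derive t 1 v (b * u t + a * v t)) ->
  forall t, expR (- a * t) * (cos (b * t) * u t + sin (b * t) * v t) = u 0 /\
            expR (- a * t) * (cos (b * t) * v t - sin (b * t) * u t) = v 0.
Proof.
move=> huv t; split.
- have -> : u 0 = expR (- a * 0) * (cos (b * 0) * u 0 + sin (b * 0) * v 0).
    by rewrite !mulr0 expR0 cos0 sin0 mul1r mul0r addr0 mul1r.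
  apply: (@is_derive_0_is_cst _
    (fun t => expR (- a * t) * (cos (b * t) * u t + sin (b * t) * v t))) => s.
  have [hu hv] := huv s; apply: trigger_derive; rewrite /GRing.scale /= !mulr1; ring.
- have -> : v 0 = expR (- a * 0) * (cos (b * 0) * v 0 - sin (b * 0) * u 0).
    by rewrite !mulr0 expR0 cos0 sin0 mul1r mul0r subr0 mul1r.
  apply: (@is_derive_0_is_cst _
    (fun t => expR (- a * t) * (cos (b * t) * v t - sin (b * t) * u t))) => s.
  have [hu hv] := huv s; apply: trigger_derive; rewrite /GRing.scale /= !mulr1; ring.
Qed.

Lemma scalar_solution_invariant lam y :
  scalar_solution lam y -> forall t, cexp (- (lam * hC t)) * y t = y 0.
Proof.
case: lam => a b hy t.
have huv s : is_derive s 1 (fun s => complex.Re (y s))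
               (a * complex.Re (y s) - b * complex.Im (y s)) /\
             is_derive s 1 (fun s => complex.Im (y s))
               (b * complex.Re (y s) + a * complex.Im (y s)).
  by have := hy s; case: (y s) => p q /=; rewrite [a * q + _]addrC.
have -> : y 0 = Complex (complex.Re (y 0)) (complex.Im (y 0)) by case: (y 0).
have [<- <-] := damped_rotation_invariant huv t.
case: (y t) => p q; rewrite /cexp /hC /= !mulr0 subr0 add0r cosN sinN -mulNr.
by apply/eqP; rewrite eq_complex /=; apply/andP; split; apply/eqP; ring.
Qed.

Lemma scalar_solution_shift lam y :
  scalar_solution lam y -> forall t h, y (t + h) = cexp (lam * hC h) * y t.
Proof.
move=> hy t h.
have := scalar_solution_invariant hy (t + h).
rewrite -(scalar_solution_invariant hy t).
move=> /(congr1 (fun w => cexp (lam * hC (t + h)) * w)).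
rewrite !mulrA -(mulrC (cexp _)) cexpNK mul1r => ->.
by rewrite -cexpD hCD mulrDr addrAC subrr add0r.
Qed.

End ScalarLinearODE.

Section DiagonalSystems.
Variables (R : realType) (n : nat) (d : 'rV[R[i]]_n).

Lemma diag_solution_component (x : R -> 'cV[R[i]]_n) i :
  is_solution (diag_mx d) x -> scalar_solution (d 0 i) (fun s => x s i 0).
Proof. by move=> hx t; have := hx t i; rewrite mul_diag_mx mxE. Qed.

Lemma theta_scheme_diag_component (phi theta : R[i]) (xk xk1 : 'cV[R[i]]_n) i :
  theta_scheme (diag_mx d) 1 phi theta xk xk1 ->
  (phi^-1 - theta * d 0 i) * xk1 i 0 = (phi^-1 + (1 - theta) * d 0 i) * xk i 0.
Proof.
rewrite /theta_scheme => /matrixP/(_ i 0); rewrite mul_diag_mx !mxE mul1r => e.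
apply/eqP; rewrite -subr_eq0 [X in X == 0](_ : _ = phi^-1 * (xk1 i 0 - xk i 0)
  - d 0 i * (theta * xk1 i 0 + (1 - theta) * xk i 0)); last by ring.
by rewrite e subrr.
Qed.

Lemma theta_scheme_diag_exact (h : R) (phi theta : R[i]) :
  (forall i, phi^-1 - theta * d 0 i != 0) ->
  (forall i, phi^-1 + (1 - theta) * d 0 i =
             cexp (d 0 i * hC h) * (phi^-1 - theta * d 0 i)) ->
  exact_scheme (diag_mx d) h (theta_scheme (diag_mx d) 1 phi theta).
Proof.
move=> solvable amplification x0 xs xs0 hstep x hx hx0.
have step k i : xs k.+1 i 0 = cexp (d 0 i * hC h) * xs k i 0.
  apply: (mulfI (solvable i)).
  rewrite mulrA [_ * cexp _]mulrC -amplification.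
  exact: theta_scheme_diag_component (hstep k).
elim=> [|k IH]; first by rewrite mul0r xs0 hx0.
apply/matrixP => i j; rewrite (ord1 j) step IH -natr1 mulrDl mul1r.
by rewrite (scalar_solution_shift (diag_solution_component i hx)).
Qed.

End DiagonalSystems.

Lemma unitmx_scalar_sub_diag (F : fieldType) n (a b : F) (d : 'rV[F]_n) :
  (a%:M - b *: diag_mx d) \in unitmx -> forall i, a - b * d 0 i != 0.
Proof.
have -> : a%:M - b *: diag_mx d = diag_mx (\row_i (a - b * d 0 i)).
  apply/matrixP => i j; rewrite !mxE.
  by case: (eqVneq i j) => [->|_] /=; rewrite ?mulr0n ?mulr1n ?mulr0 ?subr0.
rewrite unitmxE unitfE det_diag => /prodf_neq0 nz i.
by have := nz i isT; rewrite mxE.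
Qed.

Section ThetaSchemeCoefficients.
Variables (F : fieldType) (l2 l3 E2 E3 : F).

Definition phi_coef : F :=
  ((l2 - l3) * (E2 - 1) * (E3 - 1)) / (l2 * l3 * (E2 - E3)).

Definition theta_coef : F :=
  (l3 * (E2 - 1) - l2 * (E3 - 1)) / ((l2 - l3) * (E2 - 1) * (E3 - 1)).

Lemma theta_coef_amplification :
  l2 != 0 -> l3 != 0 -> l2 != l3 -> E2 != E3 -> E2 != 1 -> E3 != 1 ->
  phi_coef^-1 + (1 - theta_coef) * l2 = E2 * (phi_coef^-1 - theta_coef * l2).
Proof.
move=> nz2 nz3 n23 nE23 nE2 nE3; rewrite /phi_coef /theta_coef.
by field; rewrite !subr_eq0 nz2 nz3 n23 nE23 nE2 nE3.
Qed.

End ThetaSchemeCoefficients.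

Lemma phi_coefC (F : fieldType) (l2 l3 E2 E3 : F) :
  phi_coef l2 l3 E2 E3 = phi_coef l3 l2 E3 E2.
Proof. by rewrite /phi_coef -mulrNN -invrN; congr (_ / _); ring. Qed.

Lemma theta_coefC (F : fieldType) (l2 l3 E2 E3 : F) :
  theta_coef l2 l3 E2 E3 = theta_coef l3 l2 E3 E2.
Proof. by rewrite /theta_coef -mulrNN -invrN; congr (_ / _); ring. Qed.

Theorem theorem5 (R : realType) (l2 l3 : R[i]) (h : R) :
  l2 != 0 -> l3 != 0 -> l2 != l3 -> 0 < h ->
  (* the expressions for phi and theta are defined *)
  l2 * l3 * (cexp (l2 * hC h) - cexp (l3 * hC h)) != 0 ->
  (l2 - l3) * (cexp (l2 * hC h) - 1) * (cexp (l3 * hC h) - 1) != 0 ->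
  (* the scheme (which divides by phi) is defined *)
  phi5 l2 l3 h != 0 ->
  (* the scheme is uniquely solvable for x_{k+1} *)
  ((phi5 l2 l3 h)^-1%:M - theta5 l2 l3 h *: J1star l2 l3) \in unitmx ->
  exact_scheme (J1star l2 l3) h
    (theta_scheme (J1star l2 l3) psi5 (phi5 l2 l3 h) (theta5 l2 l3 h)).
Proof.
move=> nz2 nz3 n23 _ defined_phi defined_theta _ solvable.
have [nE23 nE2 nE3] : [/\ cexp (l2 * hC h) != cexp (l3 * hC h),
    cexp (l2 * hC h) != 1 & cexp (l3 * hC h) != 1].
  move: defined_phi defined_theta; rewrite !mulf_eq0 !negb_or !subr_eq0.
  by move=> /andP[_ ->] /andP[/andP[_ ->] ->].
apply: theta_scheme_diag_exact => [|[[|[|[|//]]] ?]]; rewrite ?mxE /=.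
- exact: unitmx_scalar_sub_diag solvable.
- by rewrite mul0r cexp0 !mulr0 addr0 subr0 mul1r.
- exact: theta_coef_amplification.
- rewrite /phi5 /theta5 -/(phi_coef _ _ _ _) -/(theta_coef _ _ _ _).
  rewrite phi_coefC theta_coefC.
  by apply: theta_coef_amplification; rewrite // eq_sym.
Qed.
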